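(* Let $N\ge1$ and let $a_0,\dots,a_N$, $b_0,\dots,b_N$, $c_0,\dots,c_N$ be real numbers such that the $a_i$ are pairwise distinct, the $b_j$ are pairwise distinct, and the $c_k$ are pairwise distinct. Then the $\binom{N+3}{3}$ operators $$(a_i\mathbb{I}+b_j\sigma_X+c_k\sigma_Y+\sigma_Z)^{\otimes N},\qquad i,j,k\in\mathbb{Z}_{\ge0},\ i+j+k\le N,$$ are linearly independent over $\mathbb{R}$ and form a basis of the real vector space $\mathrm{Sym}_N(G_1)$ of permutation-invariant Hermitian operators on $N$ qubits.
   Context: $\mathbb{I},\sigma_X,\sigma_Y,\sigma_Z$ denote the $2\times2$ identity and Pauli matrices. For $\pi\in S_N$, $P(\pi)$ is the unitary on $(\mathbb{C}^2)^{\otimes N}$ permuting the tensor factors according to $\pi$. $\mathrm{Sym}_N(G_1)$ is the real vector space of Hermitian operators $M$ on $(\mathbb{C}^2)^{\otimes N}$ with $P(\pi)MP(\pi)^\dagger=M$ for all $\pi\in S_N$; it has real dimension $\binom{N+3}{3}$. *)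

From HB Require Import structures.
From mathcomp Require Import all_boot all_order all_algebra all_fingroup.
Set Implicit Arguments. Unset Strict Implicit. Unset Printing Implicit Defensive.
Import Order.TTheory GRing.Theory Num.Theory.
Local Open Scope ring_scope.

(* Computational basis of N qubits: bit strings x : 'I_N -> 'I_2. *)
Definition qbits (N : nat) : finType := {ffun 'I_N -> 'I_2}.
Definition qdim (N : nat) : nat := #|{: qbits N}|.
Definition qidx (N : nat) (i : 'I_(qdim N)) : qbits N := enum_val i.

Section Ops.
Variable C : numClosedFieldType.

Definition matI : 'M[C]_2 := 1%:M.
Definition sigmaX : 'M[C]_2 :=
  \matrix_(r < 2, c < 2) (if r == c then 0 else 1).
Definition sigmaY : 'M[C]_2 :=
  \matrix_(r < 2, c < 2)
    (if r == c then 0 else if (r == 0 :> nat) then - 'i else 'i).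
Definition sigmaZ : 'M[C]_2 :=
  \matrix_(r < 2, c < 2) (if r == c then (if (r == 0 :> nat) then 1 else -1) else 0).

Definition adj_mx (n : nat) (M : 'M[C]_n) : 'M[C]_n := map_mx Num.conj (M^T).

Definition tpow (N : nat) (A : 'M[C]_2) : 'M[C]_(qdim N) :=
  \matrix_(i, j) \prod_(l < N) A (qidx i l) (qidx j l).

(* P(pi): permutes the tensor factors, |x_1..x_N> |-> |x_{pi^-1 1} .. x_{pi^-1 N}>. *)
Definition Pperm (N : nat) (pi : {perm 'I_N}) : 'M[C]_(qdim N) :=
  \matrix_(i, j)
    (qidx i == [ffun l => qidx j ((pi^-1)%g l)])%:R.

Definition hermitian (n : nat) (M : 'M[C]_n) : Prop := adj_mx M = M.

Definition SymN (N : nat) (M : 'M[C]_(qdim N)) : Prop :=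
  hermitian M /\
  forall pi : {perm 'I_N}, Pperm pi *m M *m adj_mx (Pperm pi) = M.

Definition Top (N : nat) (a b c : C) : 'M[C]_(qdim N) :=
  tpow N (a *: matI + b *: sigmaX + c *: sigmaY + sigmaZ).
End Ops.

(* Write A(x,y,z) = x I + y X + z Y + Z = [[x+1, y-iz], [y+iz, x-1]].  Every
   affine form in (x,y,z) is a linear functional of A(x,y,z), and a product of N
   such functionals is a linear combination, with coefficients independent of
   (x,y,z), of the entries of A(x,y,z)^{tensor N} ([prod_lform]).
   - Invariance: hermiticity and permutation invariance of a tensor power are
     checked entrywise.
   - Independence: a linear relation among the tensor powers yields the same
     relation among the values of  prod_(i<q1)(x-a_i) prod_(j<q2)(y-b_j)
     prod_(k<q3)(z-c_k).  These values form a triangular system with nonzero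
     diagonal for the componentwise order on triples ([tentry_indep]).
   - Spanning: the entries of an invariant matrix are constant on the orbits of
     pairs of bit strings under simultaneous permutation; the orbits are
     classified by admissible triples ([orbit_type]).  The square matrix of
     values of the tensor powers on orbit representatives is invertible by the
     independence result, which gives an expansion; hermiticity and
     independence once more make its coefficients real. *)

From Pilot Require Import Defs.
From HB Require Import structures.
From mathcomp Require Import all_boot all_order all_algebra all_fingroup.
From mathcomp Require Import ring zify.
Set Implicit Arguments. Unset Strict Implicit. Unset Printing Implicit Defensive.
Import Order.TTheory GRing.Theory Num.Theory.
Local Open Scope ring_scope.

Section PauliCombination.
Variable C : numClosedFieldType.

Definition pauli (x y z : C) : 'M[C]_2 :=
  x *: matI C + y *: sigmaX C + z *: sigmaY C + sigmaZ C.

Definition o0 : 'I_2 := ord0.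
Definition o1 : 'I_2 := ord_max.

Lemma I2_cases (r : 'I_2) : r = o0 \/ r = o1.
Proof. by case: r => [[|[|//]]] lt_r2; [left | right]; apply: val_inj. Qed.

Lemma sum_I2 (F : 'I_2 -> C) : \sum_r F r = F o0 + F o1.
Proof. by rewrite big_ord_recl big_ord_recl big_ord0 addr0; congr (_ + F _); apply: val_inj. Qed.

Lemma pauli00 x y z : pauli x y z o0 o0 = x + 1. Proof. by rewrite !mxE /=; ring. Qed.
Lemma pauli11 x y z : pauli x y z o1 o1 = x - 1. Proof. by rewrite !mxE /=; ring. Qed.
Lemma pauli01 x y z : pauli x y z o0 o1 = y - z * 'i. Proof. by rewrite !mxE /=; ring. Qed.
Lemma pauli10 x y z : pauli x y z o1 o0 = y + z * 'i. Proof. by rewrite !mxE /=; ring. Qed.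

Lemma pauli_herm x y z : x \is Num.real -> y \is Num.real -> z \is Num.real ->
  forall r s, Num.conj (pauli x y z s r) = pauli x y z r s.
Proof.
move=> /conj_Creal cx /conj_Creal cy /conj_Creal cz r s.
have ci : Num.conj 'i = - 'i :> C := conjCi _.
by case: (I2_cases r) => ->; case: (I2_cases s) => ->;
  rewrite ?pauli00 ?pauli11 ?pauli01 ?pauli10 ?rmorphD ?rmorphB ?rmorph1 ?rmorphN ?rmorphM /=
    ?cx ?cy ?cz ?ci //; ring.
Qed.

Definition lform (L A : 'M[C]_2) : C := \sum_r \sum_s L r s * A r s.

(* Every affine form in (x, y, z) is such a functional evaluated at [pauli x y z]. *)
Definition affine_form (al be ga de : C) : 'M[C]_2 :=
  \matrix_(r, s) (if r == s then (if r == o0 then (al + de) / 2 else (al - de) / 2)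
                  else if r == o0 then (be + ga * 'i) / 2 else (be - ga * 'i) / 2).

Lemma lform_affine al be ga de x y z :
  lform (affine_form al be ga de) (pauli x y z) = al * x + be * y + ga * z + de.
Proof.
rewrite /lform !sum_I2 pauli00 pauli11 pauli01 pauli10 !mxE /=.
have two_neq0 : (2 : C) != 0 by rewrite pnatr_eq0.
have ii : 'i * 'i = -1 :> C by rewrite -expr2 sqrCi.
transitivity (al * x + de + be * y - ga * z * ('i * 'i)); first by field.
by rewrite ii; ring.
Qed.

End PauliCombination.

Lemma sum_deltal (R : pzSemiRingType) n (F : 'I_n -> R) j0 :
  \sum_j (j == j0)%:R * F j = F j0.
Proof.
by rewrite (bigD1 j0) //= eqxx mul1r big1 ?addr0 // => j /negbTE ->; rewrite mul0r.
Qed.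

Lemma sum_deltar (R : pzSemiRingType) n (F : 'I_n -> R) j0 :
  \sum_j F j * (j == j0)%:R = F j0.
Proof.
by rewrite (bigD1 j0) //= eqxx mulr1 big1 ?addr0 // => j /negbTE ->; rewrite mulr0.
Qed.

Section TensorPower.
Variables (C : numClosedFieldType) (N : nat).

Definition tentry (A : 'M[C]_2) (x y : qbits N) : C := \prod_(l < N) A (x l) (y l).

Lemma tpowE A x y : tpow N A (enum_rank x) (enum_rank y) = tentry A x y.
Proof. by rewrite mxE /qidx !enum_rankK. Qed.

Lemma prod_lform (s : seq 'M[C]_2) (A : 'M[C]_2) : size s = N ->
  \prod_(L <- s) lform L A =
  \sum_(f : {ffun 'I_N -> 'I_2 * 'I_2})
     (\prod_(l < N) (nth 0 s l) (f l).1 (f l).2) *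
     tentry A [ffun l => (f l).1] [ffun l => (f l).2].
Proof.
move=> size_s; rewrite (big_nth 0) size_s big_mkord.
under eq_bigr do rewrite /lform pair_bigA.
rewrite bigA_distr_bigA; apply: eq_bigr => f _.
by rewrite -big_split /=; apply: eq_bigr => l _; rewrite !ffunE.
Qed.

Definition permute (x : qbits N) (pi : {perm 'I_N}) : qbits N := [ffun l => x (pi l)].

Definition perm_invariant (F : qbits N -> qbits N -> C) : Prop :=
  forall x y (pi : {perm 'I_N}), F (permute x pi) (permute y pi) = F x y.

Lemma Pperm_index (pi : {perm 'I_N}) (i j : 'I_(qdim N)) :
  (qidx i == [ffun l => qidx j ((pi^-1)%g l)]) = (j == enum_rank (permute (qidx i) pi)).
Proof.
apply/eqP/eqP => [qi | ->].
  apply: enum_val_inj; rewrite enum_rankK; apply/ffunP => l.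
  by rewrite /permute qi !ffunE permK.
by apply/ffunP => l; rewrite !ffunE /qidx enum_rankK /permute ffunE permKV.
Qed.

Lemma Pperm_conj (M : 'M[C]_(qdim N)) (pi : {perm 'I_N}) i j :
  (Pperm C pi *m M *m adj_mx (Pperm C pi)) i j =
  M (enum_rank (permute (qidx i) pi)) (enum_rank (permute (qidx j) pi)).
Proof.
rewrite mxE; under eq_bigr do rewrite !mxE Pperm_index rmorph_nat.
rewrite sum_deltar; under eq_bigr do rewrite mxE Pperm_index.
exact: sum_deltal.
Qed.

(* Permuting the qubits only reorders the factors of a tensor-power entry. *)
Lemma tentry_perm_invariant A : perm_invariant (tentry A).
Proof.
move=> x y pi; rewrite /tentry [RHS](reindex_inj (@perm_inj _ pi)) /=.
by apply: eq_bigr => l _; rewrite !ffunE.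
Qed.

Lemma entries_perm_invariant (M : 'M[C]_(qdim N)) :
  (forall pi : {perm 'I_N}, Pperm C pi *m M *m adj_mx (Pperm C pi) = M) ->
  perm_invariant (fun x y => M (enum_rank x) (enum_rank y)).
Proof.
move=> M_inv x y pi.
have := congr1 (fun m : 'M[C]_(qdim N) => m (enum_rank x) (enum_rank y)) (M_inv pi).
by rewrite Pperm_conj /qidx !enum_rankK.
Qed.

Lemma tpow_perm_invariant A (pi : {perm 'I_N}) :
  Pperm C pi *m tpow N A *m adj_mx (Pperm C pi) = tpow N A.
Proof.
apply/matrixP => i j; rewrite Pperm_conj !tpowE -[i]enum_valK -[j]enum_valK tpowE.
by rewrite /qidx !enum_rankK tentry_perm_invariant.
Qed.

(* Tensor powers of a Hermitian matrix are Hermitian (qualified name, since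
   MathComp defines another [hermitian]). *)
Lemma tpow_herm (A : 'M[C]_2) :
  (forall r s, Num.conj (A s r) = A r s) -> Defs.hermitian (tpow N A).
Proof.
move=> herm_A; apply/matrixP => i j; rewrite !mxE (rmorph_prod (@Num.conj C)).
by apply: eq_bigr => l _; apply: herm_A.
Qed.

End TensorPower.

Section Triples.
Variable N : nat.

Definition K3 := ('I_N.+1 * ('I_N.+1 * 'I_N.+1))%type.
Definition weight (p : K3) : nat := p.1 + p.2.1 + p.2.2.
Definition good (p : K3) : bool := (weight p <= N)%N.

Definition le3 (q p : K3) : bool :=
  [&& (q.1 <= p.1)%N, (q.2.1 <= p.2.1)%N & (q.2.2 <= p.2.2)%N].

Lemma le3_weight_lt q p : le3 q p -> p != q -> (weight q < weight p)%N.
Proof.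
case: p q => [p1 [p2 p3]] [q1 [q2 q3]] /and3P[/= le_1 le_2 le_3] neq_pq.
rewrite /weight /= ltn_neqAle; apply/andP; split; last by lia.
apply: contra neq_pq => /eqP eq_w.
by apply/eqP; congr (_, (_, _)); apply: ord_inj; lia.
Qed.

(* A triangular system with nonzero diagonal has only the trivial solution:
   induct downwards on the weight, from N to 0. *)
Lemma triangular_system (R : idomainType) (G : K3 -> K3 -> R) (lam : K3 -> R) :
  (forall q p, ~~ le3 q p -> G q p = 0) -> (forall q, G q q != 0) ->
  (forall q, good q -> \sum_(p | good p) lam p * G q p = 0) ->
  forall q, good q -> lam q = 0.
Proof.
move=> G_tri G_diag sys.
suff lam0 n q : (N - weight q < n)%N -> good q -> lam q = 0 by move=> q; apply: (lam0 _ q).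
elim: n q => [//|n IH] q lt_qn good_q.
move: (sys q good_q); rewrite (bigD1 q) //= big1 ?addr0.
  by move/eqP; rewrite mulf_eq0 (negbTE (G_diag q)) orbF => /eqP.
move=> p /andP[good_p neq_pq].
have [le_qp | nle_qp] := boolP (le3 q p); last by rewrite G_tri ?mulr0.
rewrite IH ?mul0r //; have := le3_weight_lt le_qp neq_pq.
by move: good_p good_q lt_qn; rewrite /good; lia.
Qed.

Lemma sum_triples (R : nmodType) (F : 'I_N.+1 -> 'I_N.+1 -> 'I_N.+1 -> R) :
  \sum_(i < N.+1) \sum_(j < N.+1) \sum_(k < N.+1 | (i + j + k <= N)%N) F i j k =
  \sum_(p : K3 | good p) F p.1 p.2.1 p.2.2.
Proof.
under eq_bigr => i _ do rewrite (pair_big_dep xpredT (fun j k : 'I_N.+1 => (i + j + k <= N)%N)).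
by rewrite (pair_big_dep xpredT).
Qed.

End Triples.

Section Independence.
Variables (C : numClosedFieldType) (N : nat) (a b c : 'I_N.+1 -> C).
Hypotheses (inj_a : injective a) (inj_b : injective b) (inj_c : injective c).

Definition Ap (p : K3 N) : 'M[C]_2 := pauli (a p.1) (b p.2.1) (c p.2.2).

Lemma sum_prod_lform (lam : K3 N -> C) :
  (forall x y : qbits N, \sum_(p | good p) lam p * tentry (Ap p) x y = 0) ->
  forall s, size s = N -> \sum_(p | good p) lam p * \prod_(L <- s) lform L (Ap p) = 0.
Proof.
move=> rel s size_s.
under eq_bigr => p _ do rewrite (prod_lform _ size_s) mulr_sumr.
rewrite exchange_big /= big1 // => f _.
under eq_bigr => p _ do rewrite mulrCA.
by rewrite -mulr_sumr rel mulr0.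
Qed.

(* The test functionals for the triple q: the affine forms x - a_i (i < q1),
   y - b_j (j < q2), z - c_k (k < q3), padded with the constant form 1. *)
Definition test_forms (q : K3 N) : seq 'M[C]_2 :=
  [seq affine_form 1 0 0 (- a (inord i)) | i <- iota 0 q.1] ++
  [seq affine_form 0 1 0 (- b (inord j)) | j <- iota 0 q.2.1] ++
  [seq affine_form 0 0 1 (- c (inord k)) | k <- iota 0 q.2.2] ++
  nseq (N - weight q) (affine_form 0 0 0 1).

Lemma size_test_forms q : good q -> size (test_forms q) = N.
Proof.
rewrite /good /weight => good_q.
by rewrite /test_forms !size_cat !size_map !size_iota size_nseq !addnA subnKC.
Qed.

Definition test_value (q p : K3 N) : C :=
  (\prod_(i <- iota 0 q.1) (a p.1 - a (inord i))) *
  (\prod_(j <- iota 0 q.2.1) (b p.2.1 - b (inord j))) *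
  (\prod_(k <- iota 0 q.2.2) (c p.2.2 - c (inord k))).

Lemma prod_test_forms q p : \prod_(L <- test_forms q) lform L (Ap p) = test_value q p.
Proof.
rewrite /test_forms !big_cat !big_map /test_value /Ap.
rewrite [\big[_/_]_(i <- nseq _ _) _]big1_seq; last first.
  by move=> L /andP[_]; rewrite mem_nseq => /andP[_ /eqP ->]; rewrite lform_affine; ring.
rewrite /= mulr1 !mulrA; congr (_ * _ * _); apply: eq_bigr => i _; rewrite lform_affine; ring.
Qed.

Lemma test_value_tri q p : ~~ le3 q p -> test_value q p = 0.
Proof.
rewrite /le3 !negb_and -!ltnNge /test_value => /or3P[lt_p | lt_p | lt_p].
- by rewrite (big_rem (val p.1)) ?mem_iota //= inord_val subrr !mul0r.
- by rewrite [X in _ * X * _](big_rem (val p.2.1)) ?mem_iota //= inord_val subrr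
    mul0r mulr0 mul0r.
- by rewrite [X in _ * X](big_rem (val p.2.2)) ?mem_iota //= inord_val subrr mul0r mulr0.
Qed.

Lemma test_value_diag q : test_value q q != 0.
Proof.
have neq (f : 'I_N.+1 -> C) (m : 'I_N.+1) i :
    injective f -> i \in iota 0 m -> f m - f (inord i) != 0.
  move=> inj_f; rewrite mem_iota add0n => /andP[_ lt_im]; rewrite subr_eq0.
  have lt_iN : (i < N.+1)%N := ltn_trans lt_im (ltn_ord m).
  by apply: contraTneq lt_im => /inj_f ->; rewrite inordK ?ltnn.
rewrite /test_value !mulf_neq0 // prodf_seq_neq0; apply/allP => i i_in; exact: neq.
Qed.

Lemma tentry_indep (lam : K3 N -> C) :
  (forall x y : qbits N, \sum_(p | good p) lam p * tentry (Ap p) x y = 0) ->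
  forall p, good p -> lam p = 0.
Proof.
move=> rel; apply: (triangular_system test_value_tri test_value_diag) => q good_q.
rewrite -[RHS](sum_prod_lform rel (size_test_forms good_q)).
by apply: eq_bigr => p _; rewrite prod_test_forms.
Qed.

End Independence.

Section OrbitTypes.
Variable N : nat.

Definition pair_word (x y : qbits N) : N.-tuple ('I_2 * 'I_2) := [tuple (x l, y l) | l < N].
Definition occ (v : 'I_2 * 'I_2) (x y : qbits N) : nat := count_mem v (pair_word x y).

(* The orbit type of (x, y): the numbers of positions carrying (0,0), (0,1), (1,0);
   the number of (1,1) positions is then determined. *)
Definition orbit_type (x y : qbits N) : K3 N :=
  (inord (occ (o0, o0) x y), (inord (occ (o0, o1) x y), inord (occ (o1, o0) x y))).

Lemma count_pairs (s : seq ('I_2 * 'I_2)) :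
  (count_mem (o0, o0) s + count_mem (o0, o1) s + count_mem (o1, o0) s
   + count_mem (o1, o1) s = size s)%N.
Proof.
elim: s => [//|[r t] s IH] /=.
by case: (I2_cases r) => ->; case: (I2_cases t) => -> /=; rewrite ?eqxx /=;
  rewrite !add0n ?add1n -IH ?addSn ?addnS.
Qed.

Lemma occ_le v x y : (occ v x y <= N)%N.
Proof. by rewrite /occ -{2}(size_tuple (pair_word x y)) count_size. Qed.

Lemma good_orbit_type x y : good (orbit_type x y).
Proof.
rewrite /good /weight /orbit_type /= !inordK ?ltnS ?occ_le //.
by have := count_pairs (pair_word x y); rewrite size_tuple /occ; lia.
Qed.

Lemma orbit_type_perm x y x' y' : orbit_type x y = orbit_type x' y' ->
  exists pi : {perm 'I_N}, x' = permute x pi /\ y' = permute y pi.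
Proof.
rewrite /orbit_type => -[/(congr1 val) + /(congr1 val) + /(congr1 val)].
rewrite /= !inordK ?ltnS ?occ_le // => e00 e01 e10.
have e11 : occ (o1, o1) x y = occ (o1, o1) x' y'.
  have := count_pairs (pair_word x y); have := count_pairs (pair_word x' y').
  by rewrite !size_tuple /occ in e00 e01 e10 *; lia.
have /tuple_permP[pi e] : perm_eq (pair_word x' y') (pair_word x y).
  apply/allP => v _; apply/eqP; rewrite /= -/(occ v x' y') -/(occ v x y).
  by case: v => r t; case: (I2_cases r) => ->; case: (I2_cases t) => ->.
have words : pair_word x' y' = [tuple tnth (pair_word x y) (pi i) | i < N].
  exact: val_inj.
exists pi; split; apply/ffunP => l; have := congr1 (fun t => tnth t l) words;
  by rewrite /pair_word !tnth_mktuple ffunE => -[].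
Qed.

Definition orbit_rep (t : K3 N) : option (qbits N * qbits N) :=
  [pick xy : qbits N * qbits N | orbit_type xy.1 xy.2 == t].

Lemma orbit_repP x y :
  exists2 xy, orbit_rep (orbit_type x y) = Some xy & orbit_type xy.1 xy.2 = orbit_type x y.
Proof.
rewrite /orbit_rep; case: pickP => [xy /eqP e | /(_ (x, y))]; first by exists xy.
by rewrite /= eqxx.
Qed.

End OrbitTypes.

Section Spanning.
Variables (C : numClosedFieldType) (N : nat) (a b c : 'I_N.+1 -> C).
Hypotheses (inj_a : injective a) (inj_b : injective b) (inj_c : injective c).

Let Ap := Ap a b c.

(* Admissible triples, which index both the operators and the orbit types. *)
Definition Good : finType := {p : K3 N | good p}.
Definition nG : nat := #|{: Good}|.

Lemma sum_good (F : K3 N -> C) : \sum_(p | good p) F p = \sum_(t : Good) F (val t).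
Proof.
rewrite (reindex_omap (val : Good -> K3 N) insub) => [|p good_p]; last by rewrite insubT.
by apply: eq_bigl => -[p good_p] /=; rewrite insubT ?good_p /= eqxx.
Qed.

Definition orbit_of (x y : qbits N) : Good := Sub (orbit_type x y) (good_orbit_type x y).

Definition orbit_value (F : qbits N -> qbits N -> C) (t : K3 N) : C :=
  if orbit_rep t is Some xy then F xy.1 xy.2 else 0.

Lemma orbit_valueE F x y : perm_invariant F -> orbit_value F (orbit_type x y) = F x y.
Proof.
move=> F_inv; rewrite /orbit_value; have [xy -> /orbit_type_perm[pi [-> ->]]] := orbit_repP x y.
by rewrite F_inv.
Qed.

Definition orbit_matrix : 'M[C]_nG :=
  \matrix_(r, s) orbit_value (tentry (Ap (val (enum_val r)))) (val (enum_val s)).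

Definition coef (v : 'rV[C]_nG) (p : K3 N) : C :=
  if insub p is Some t then v 0 (enum_rank t) else 0.

Lemma mul_orbit_matrix (v : 'rV[C]_nG) x y :
  (v *m orbit_matrix) 0 (enum_rank (orbit_of x y)) =
  \sum_(p | good p) coef v p * tentry (Ap p) x y.
Proof.
rewrite mxE sum_good (reindex (@enum_rank Good)) /=; last first.
  by apply: onW_bij; apply: enum_rank_bij.
apply: eq_bigr => t _; rewrite !mxE !enum_rankK /coef valK orbit_valueE //.
exact: tentry_perm_invariant.
Qed.

Lemma orbit_matrix_unit : orbit_matrix \in unitmx.
Proof.
rewrite unitmxE unitfE; apply/negP => /det0P[v v_neq0 vV0]; case/negP: v_neq0.
have coef0 : forall p, good p -> coef v p = 0.
  by apply: (tentry_indep inj_a inj_b inj_c) => x y; rewrite -mul_orbit_matrix vV0 mxE.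
apply/eqP/rowP => r; rewrite mxE -[r]enum_valK.
by have := coef0 _ (valP (enum_val r)); rewrite /coef valK.
Qed.

(* Every permutation-invariant matrix is a complex combination of the
   admissible tensor powers: solve the invertible orbit system. *)
Lemma invariant_expansion (M : 'M[C]_(qdim N)) :
  perm_invariant (fun x y => M (enum_rank x) (enum_rank y)) ->
  exists lam : K3 N -> C, forall x y,
    M (enum_rank x) (enum_rank y) = \sum_(p | good p) lam p * tentry (Ap p) x y.
Proof.
move=> M_inv.
pose w : 'rV[C]_nG :=
  \row_s orbit_value (fun x y => M (enum_rank x) (enum_rank y)) (val (enum_val s)).
pose v := w *m invmx orbit_matrix.
exists (coef v) => x y; rewrite -mul_orbit_matrix mulmxKV ?orbit_matrix_unit //.
by rewrite mxE enum_rankK orbit_valueE.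
Qed.

Hypotheses (real_a : forall i, a i \is Num.real) (real_b : forall j, b j \is Num.real)
  (real_c : forall k, c k \is Num.real).

Lemma tentry_conj p (x y : qbits N) : Num.conj (tentry (Ap p) y x) = tentry (Ap p) x y.
Proof.
rewrite /tentry (rmorph_prod (@Num.conj C)); apply: eq_bigr => l _.
exact: pauli_herm.
Qed.

(* For a Hermitian matrix the expansion coefficients are real: their imaginary
   parts satisfy a relation among the entries, hence vanish by independence. *)
Lemma expansion_real (M : 'M[C]_(qdim N)) (lam : K3 N -> C) :
  Defs.hermitian M ->
  (forall x y, M (enum_rank x) (enum_rank y) = \sum_(p | good p) lam p * tentry (Ap p) x y) ->
  forall p, good p -> lam p \is Num.real.
Proof.
move=> herm_M M_eq.
have rel (x y : qbits N) : \sum_(p | good p) (lam p - Num.conj (lam p)) * tentry (Ap p) x y = 0.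
  have M_conj : M (enum_rank x) (enum_rank y) = Num.conj (M (enum_rank y) (enum_rank x)).
    by rewrite -{1}herm_M !mxE.
  under eq_bigr do rewrite mulrBl.
  apply/eqP; rewrite sumrB -M_eq M_conj M_eq rmorph_sum /= subr_eq0; apply/eqP.
  by apply: eq_bigr => p _; rewrite rmorphM /= tentry_conj.
move=> p good_p; have /eqP := tentry_indep inj_a inj_b inj_c rel good_p.
by rewrite subr_eq0 CrealE eq_sym.
Qed.

End Spanning.

Lemma combination_entry (C : numClosedFieldType) (N : nat) (a b c : 'I_N.+1 -> C)
    (lam : 'I_N.+1 -> 'I_N.+1 -> 'I_N.+1 -> C) (x y : qbits N) :
  (\sum_(i < N.+1) \sum_(j < N.+1) \sum_(k < N.+1 | (i + j + k <= N)%N)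
     lam i j k *: Top N (a i) (b j) (c k)) (enum_rank x) (enum_rank y) =
  \sum_(p | good p) lam p.1 p.2.1 p.2.2 * tentry (Ap a b c p) x y.
Proof.
rewrite sum_triples summxE; apply: eq_bigr => p _.
by rewrite mxE tpowE.
Qed.

Theorem mainTheorem3 (C : numClosedFieldType) (N : nat) (HN : (1 <= N)%N)
  (a b c : 'I_N.+1 -> C)
  (ha : forall i, a i \is Num.real) (hb : forall j, b j \is Num.real)
  (hc : forall k, c k \is Num.real)
  (ia : injective a) (ib : injective b) (ic : injective c) :
  (* each operator lies in Sym_N(G_1) *)
  (forall i j k : 'I_N.+1, (i + j + k <= N)%N -> SymN (Top N (a i) (b j) (c k)))
  /\
  (* linear independence over R *)
  (forall lam : 'I_N.+1 -> 'I_N.+1 -> 'I_N.+1 -> C,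
     (forall i j k, lam i j k \is Num.real) ->
     \sum_(i < N.+1) \sum_(j < N.+1) \sum_(k < N.+1 | (i + j + k <= N)%N)
        lam i j k *: Top N (a i) (b j) (c k) = 0 ->
     forall i j k : 'I_N.+1, (i + j + k <= N)%N -> lam i j k = 0)
  /\
  (* they span Sym_N(G_1) over R *)
  (forall M : 'M[C]_(qdim N), SymN M ->
     exists lam : 'I_N.+1 -> 'I_N.+1 -> 'I_N.+1 -> C,
       (forall i j k, lam i j k \is Num.real) /\
       M = \sum_(i < N.+1) \sum_(j < N.+1) \sum_(k < N.+1 | (i + j + k <= N)%N)
             lam i j k *: Top N (a i) (b j) (c k)).
Proof.
split; [|split].
- move=> i j k _; split; first exact/tpow_herm/pauli_herm.
  by move=> pi; apply: tpow_perm_invariant.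
- move=> lam _ comb0 i j k good_ijk.
  have rel (x y : qbits N) :
      \sum_(p | good p) lam p.1 p.2.1 p.2.2 * tentry (Ap a b c p) x y = 0.
    by rewrite -(combination_entry a b c lam) comb0 mxE.
  exact: (tentry_indep ia ib ic rel (p := (i, (j, k)))).
- move=> M [herm_M M_inv].
  have [lam M_eq] := invariant_expansion ia ib ic (entries_perm_invariant M_inv).
  have lam_real := expansion_real ia ib ic ha hb hc herm_M M_eq.
  exists (fun i j k => if good (i, (j, k)) then lam (i, (j, k)) else 0); split.
    by move=> i j k; case: ifP => [/lam_real // | _]; apply: real0.
  apply/matrixP => r s; rewrite -[r]enum_valK -[s]enum_valK combination_entry M_eq.
  by apply: eq_bigr => -[i [j k]] /= ->.
Qed.
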